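(* For any finite alphabet $\mathfrak{G}$ and any $\mathfrak{G}$-tree $\mathfrak{t}$, the map $\mathbf{V}^\star$ satisfies $\mathbf{V}^\star(\mathfrak{t}) = \sum_{u\in\mathcal{N}^{\mathrm{qm}}(\mathfrak{t})} \mathfrak{t}\downarrow u$.
   Context: $\mathfrak{G}$ is a finite alphabet (letters with arities $\geq 1$). A $\mathfrak{G}$-tree is either the leaf (the tree with no internal node) or $\mathtt{a}[\mathfrak{s}_1,\dots,\mathfrak{s}_{|\mathtt{a}|}]$, a root decorated by $\mathtt{a}\in\mathfrak{G}$ with children $\mathfrak{s}_1,\dots,\mathfrak{s}_{|\mathtt{a}|}$. Nodes are addressed by words of positive integers (root $\epsilon$, $i$-th child of $u$ is $ui$). The linear map $\mathbf{V}^\star$ on formal combinations of $\mathfrak{G}$-trees is defined recursively by: $\mathbf{V}^\star$ of the leaf is $0$; $\mathbf{V}^\star(\mathtt{a}[\mathfrak{s}, \text{leaf},\dots,\text{leaf}]) = \mathfrak{s}$; and $\mathbf{V}^\star(\mathtt{a}[\mathfrak{s}_1,\dots,\mathfrak{s}_{|\mathtt{a}|}]) = \sum_{j\in[2,|\mathtt{a}|]} \mathtt{a}[\mathfrak{s}_1,\dots,\mathfrak{s}_{j-1},\mathbf{V}^\star(\mathfrak{s}_j),\mathfrak{s}_{j+1},\dots,\mathfrak{s}_{|\mathtt{a}|}]$ whenever some $\mathfrak{s}_j$ with $j\geq 2$ is not the leaf. An internal node $u$ of $\mathfrak{t}$ is quasi-maximal if its address contains no letter $1$ and all its children except possibly the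 first one are leaves; $\mathcal{N}^{\mathrm{qm}}(\mathfrak{t})$ is the set of quasi-maximal nodes. If $\mathfrak{t}$ is obtained from a tree $\mathfrak{s}$ by grafting, at its leaf $u$, the tree $\mathtt{a}[\mathfrak{s}', \text{leaf},\dots,\text{leaf}]$ (an internal node decorated by $\mathtt{a}$ whose first child is $\mathfrak{s}'$ and other children are leaves), then the contraction $\mathfrak{t}\downarrow u$ is the tree obtained by grafting $\mathfrak{s}'$ at the leaf $u$ of $\mathfrak{s}$ instead (i.e. the node $u$ is removed and replaced by its first subtree). *)

From mathcomp Require Import all_boot.
From Stdlib Require Import Permutation.
Set Implicit Arguments. Unset Strict Implicit. Unset Printing Implicit Defensive.

Inductive tree (G : Type) : Type :=
| Leaf : tree G
| Node : G -> seq (tree G) -> tree G.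
Arguments Leaf {G}.

Fixpoint wf (G : Type) (ar : G -> nat) (t : tree G) : bool :=
  match t with
  | Leaf => true
  | Node a cs => (size cs == ar a) && all (wf ar) cs
  end.

Definition isLeaf (G : Type) (t : tree G) : bool :=
  if t is Leaf then true else false.

(* Formal N-linear combinations of trees are represented by lists of trees
   (the list [t1; ...; tn] stands for t1 + ... + tn); two combinations are
   equal iff the lists are permutations of each other. *)

Fixpoint Vstar (G : Type) (t : tree G) : seq (tree G) :=
  match t with
  | Leaf => [::]
  | Node a cs =>
      match cs with
      | [::] => [::]
      | s1 :: rest =>
          if all (@isLeaf G) rest then [:: s1]
          else
            (* all the ways of replacing exactly one s_j (j >= 2) by a
               term of V^star(s_j), expanded linearly *)
            let fix go (l : seq (tree G)) : seq (seq (tree G)) :=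
                match l with
                | [::] => [::]
                | x :: l' => map (fun v => v :: l') (Vstar x)
                             ++ map (fun l'' => x :: l'') (go l')
                end in
            map (fun l => Node a (s1 :: l)) (go rest)
      end
  end.

(* Addresses: words of positive integers; root = [::], i-th child of u is
   rcons u i (children are numbered from 1). *)
Fixpoint subtree (G : Type) (t : tree G) (u : seq nat) : option (tree G) :=
  match u with
  | [::] => Some t
  | i :: u' =>
      match t with
      | Leaf => None
      | Node _ cs => if (0 < i) && (i <= size cs)
                     then subtree (nth Leaf cs i.-1) u' else None
      end
  end.

Fixpoint nodes (G : Type) (t : tree G) : seq (seq nat) :=
  match t with
  | Leaf => [::]
  | Node _ cs =>
      let fix go (k : nat) (l : seq (tree G)) : seq (seq nat) :=
          match l with
          | [::] => [::]
          | c :: l' => map (cons k) (nodes c) ++ go k.+1 l'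
          end in
      [::] :: go 1 cs
  end.

Definition quasi_maximal (G : Type) (t : tree G) (u : seq nat) : bool :=
  (1 \notin u) &&
  match subtree t u with
  | Some (Node _ cs) => all (@isLeaf G) (behead cs)
  | _ => false
  end.

Definition N_qm (G : Type) (t : tree G) : seq (seq nat) :=
  filter (quasi_maximal t) (nodes t).

Fixpoint modify_at (G : Type) (f : tree G -> tree G) (t : tree G) (u : seq nat)
  : tree G :=
  match u with
  | [::] => f t
  | i :: u' =>
      match t with
      | Leaf => Leaf
      | Node a cs =>
          Node a (mkseq (fun k => if k == i.-1 then modify_at f (nth Leaf cs k) u'
                                  else nth Leaf cs k) (size cs))
      end
  end.

Definition contract (G : Type) (t : tree G) (u : seq nat) : tree G :=
  modify_at (fun s => match s with
                      | Node _ (s' :: _) => s'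
                      | _ => s
                      end) t u.

From mathcomp Require Import all_boot.
From Stdlib Require Import Permutation.
Set Implicit Arguments. Unset Strict Implicit. Unset Printing Implicit Defensive.

(* At a node a[s_1, ..., s_n] the address 1u is never
   quasi-maximal, and the root is quasi-maximal exactly when s_2, ..., s_n are
   leaves, in which case V^star gives s_1, the contraction at the root.
   Otherwise the quasi-maximal nodes are the addresses ju with j >= 2 and u
   quasi-maximal in s_j, and contracting there replaces s_j by s_j ↓ u; by
   induction these are the terms of V^star(s_j), which is exactly what V^star
   puts in position j. *)

Section ReplaceOne.
Variables (T : Type) (f : T -> seq T).

Fixpoint replace_one (l : seq T) : seq (seq T) :=
  match l with
  | [::] => [::]
  | x :: l' => map (fun v => v :: l') (f x) ++ map (fun l'' => x :: l'') (replace_one l')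
  end.

End ReplaceOne.

Section VstarQuasiMaximal.
Variable G : Type.
Implicit Types (a : G) (t x : tree G) (cs pre l : seq (tree G)) (u : seq nat).

Definition tree_ind_Forall (P : tree G -> Prop) (P_Leaf : P Leaf)
    (P_Node : forall a cs, List.Forall P cs -> P (Node a cs)) : forall t, P t :=
  fix ind t := match t with
  | Leaf => P_Leaf
  | Node a cs => P_Node a cs ((fix ind_seq l := match l return List.Forall P l with
        | [::] => List.Forall_nil _
        | c :: l' => List.Forall_cons c (ind c) (ind_seq l') end) cs)
  end.

Fixpoint child_nodes (k : nat) l : seq (seq nat) :=
  match l with
  | [::] => [::]
  | c :: l' => map (cons k) (nodes c) ++ child_nodes k.+1 l'
  end.

Lemma nodes_Node a cs : nodes (Node a cs) = [::] :: child_nodes 1 cs.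
Proof. by []. Qed.

Lemma child_nodes_leaves k l : all (@isLeaf G) l -> child_nodes k l = [::].
Proof. by elim: l k => //= [[|? ?]] //= l IHl k /IHl ->. Qed.

Lemma Vstar_Node a s1 rest : Vstar (Node a (s1 :: rest)) =
  if all (@isLeaf G) rest then [:: s1]
  else map (fun l => Node a (s1 :: l)) (replace_one (@Vstar G) rest).
Proof. by []. Qed.

Lemma quasi_maximal_Node a cs i u :
  quasi_maximal (Node a cs) (i :: u) =
  (1 < i <= size cs) && quasi_maximal (nth Leaf cs i.-1) u.
Proof.
rewrite /quasi_maximal /= in_cons negb_or.
by case: i => [|[|i]] /=; rewrite ?andbF //; case: (_ < _); rewrite ?andbF.
Qed.

Lemma modify_at_Node (f : tree G -> tree G) a cs i u : i < size cs ->
  modify_at f (Node a cs) (i.+1 :: u) =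
  Node a (set_nth Leaf cs i (modify_at f (nth Leaf cs i) u)).
Proof.
move=> lt_i_cs /=; congr Node.
apply: (@eq_from_nth _ Leaf); first by rewrite size_mkseq size_set_nth maxnE subnKC.
move=> j; rewrite size_mkseq => lt_j_cs; rewrite nth_mkseq // nth_set_nth /=.
by case: eqP => [->|].
Qed.

Lemma set_nth_cat_cons pre x y l :
  set_nth Leaf (pre ++ x :: l) (size pre) y = pre ++ y :: l.
Proof. by elim: pre => //= z pre ->. Qed.

Lemma quasi_maximal_cat_cons a pre x l u : 0 < size pre ->
  quasi_maximal (Node a (pre ++ x :: l)) ((size pre).+1 :: u) = quasi_maximal x u.
Proof.
move=> pre_gt0; rewrite quasi_maximal_Node ltnS pre_gt0 size_cat /= addnS ltnS.
by rewrite leq_addr /= nth_cat ltnn subnn.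
Qed.

Lemma contract_cat_cons a pre x l u :
  contract (Node a (pre ++ x :: l)) ((size pre).+1 :: u) =
  Node a (pre ++ contract x u :: l).
Proof.
rewrite /contract modify_at_Node; last by rewrite size_cat addnS ltnS leq_addr.
by rewrite nth_cat ltnn subnn set_nth_cat_cons.
Qed.

Lemma N_qm_Node a s1 rest :
  N_qm (Node a (s1 :: rest)) =
  (if all (@isLeaf G) rest then [:: [::]] else [::]) ++
  filter (quasi_maximal (Node a (s1 :: rest))) (child_nodes 2 rest).
Proof.
rewrite /N_qm nodes_Node /= filter_cat filter_map.
rewrite (@eq_filter _ _ pred0) => [|u]; last by rewrite /= /quasi_maximal in_cons.
by rewrite filter_pred0 {1}/quasi_maximal /=; case: all.
Qed.

Fixpoint no_nullary t : bool :=
  if t is Node _ cs then (0 < size cs) && all no_nullary cs else true.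

Lemma wf_no_nullary (ar : G -> nat) t :
  (forall a, 0 < ar a) -> wf ar t -> no_nullary t.
Proof.
move=> ar_gt0; elim/tree_ind_Forall: t => // a cs IHcs /= /andP[/eqP -> wf_cs].
rewrite ar_gt0 /=; elim: cs IHcs wf_cs => //= c cs IH.
by case/List.Forall_cons_iff => IHc /IH {}IH /andP[/IHc -> /IH].
Qed.

Definition Vstar_qm_expansion t : Prop :=
  Permutation (Vstar t) (map (contract t) (N_qm t)).

Lemma Vstar_qm_expansion_siblings a pre l :
  0 < size pre ->
  List.Forall (fun c => no_nullary c -> Vstar_qm_expansion c) l ->
  all no_nullary l ->
  Permutation (map (fun l' => Node a (pre ++ l')) (replace_one (@Vstar G) l))
    (map (contract (Node a (pre ++ l)))
       (filter (quasi_maximal (Node a (pre ++ l))) (child_nodes (size pre).+1 l))).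
Proof.
elim: l pre => [|x l IHl] //= pre pre_gt0.
case/List.Forall_cons_iff => IHx IHrest /andP[nn_x nn_l].
rewrite !map_cat filter_cat map_cat; apply: Permutation_app.
  rewrite filter_map (eq_filter (fun u => quasi_maximal_cat_cons a x l u pre_gt0)).
  rewrite -!map_comp (eq_map (contract_cat_cons a pre x l)).
  rewrite (map_comp (fun v => Node a (pre ++ v :: l)) (contract x)).
  exact/Permutation_map/IHx.
rewrite -map_comp -cat_rcons -(size_rcons pre x).
under eq_map do rewrite /= -cat_rcons.
by apply: IHl; rewrite ?size_rcons.
Qed.

(* The hypothesis is needed: for a nullary node V^star gives 0, yet the root is
   quasi-maximal. *)
Lemma Vstar_quasi_maximal t : no_nullary t -> Vstar_qm_expansion t.
Proof.
elim/tree_ind_Forall: t => [_|a [|s1 rest] IHcs /andP[//= _ /andP[_ nn_rest]]].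
  exact: perm_nil.
rewrite /Vstar_qm_expansion Vstar_Node N_qm_Node.
case: ifP => [rest_leaves | _].
  by rewrite child_nodes_leaves.
apply: (@Vstar_qm_expansion_siblings a [:: s1]) => //.
by case/List.Forall_cons_iff: IHcs.
Qed.

End VstarQuasiMaximal.

Theorem proposition2p4 (G : finType) (ar : G -> nat)
  (ar_pos : forall a : G, 0 < ar a) (t : tree G) :
  wf ar t ->
  Permutation (Vstar t) (map (contract t) (N_qm t)).
Proof. by move=> wf_t; apply/Vstar_quasi_maximal/(wf_no_nullary ar_pos). Qed.
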